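(* Let $M$ be a totally ordered finite monoid and $P\subseteq M^3$ an edge selector. Then for every $d\in\mathbb{N}$, there is no bad forest path of length greater than $2$ all of whose members belong to $\mathrm{Reg}_d$.
   Context: For $m$ in a monoid $M$, $J(m)=\{xmy:x,y\in M\}$; $M$ is totally ordered if for all $a,b$, $J(ab)=J(a)$ or $J(ab)=J(b)$. $e\in M$ is idempotent if $e^2=e$. A monoid-labelled graph over $M$ is a tuple $\mathcal{G}=(m,V,E,\lambda)$ with $m\in M$ (the evaluation of $\mathcal{G}$), $V$ a finite vertex set, $E\colon V\times V\to(M^2\to\{\top,\bot\})$ and $\lambda\colon V\to M^2$ such that $\lambda(x)=(l_x,r_x)$ satisfies $l_xr_x=m$ for all $x$. For $a,b\in M$, $a\mathcal{G}b$ has the same vertices, evaluation $amb$, labels $(al_x,r_xb)$ and edge function $(x,y)\mapsto((s,t)\mapsto E(x,y)(sa,bt))$. The downcasting $\mathrm{dc}(\mathcal{G})$ is the graph on $V$ in which distinct $x,y$ are adjacent iff $E(x,y)(1_M,1_M)=\top$. An edge selector is a fixed set $P\subseteq M^3$. The binary product $\mathcal{G}_1\odot\mathcal{G}_2$ of $\mathcal{G}_i=(m_i,V_i,E_i,\lambda_i)$ has vertex set $V_1\sqcup V_2$, evaluation $m_1m_2$, label $(l_x,r_xm_2)$ for $x\in V_1$ with $\lambda_1(x)=(l_x,r_x)$, label $(m_1l_y,r_y)$ for $y\in V_2$ with $\lambda_2(y)=(l_y,r_y)$, edge function $E_1(x,x')(s,m_2t)$ on $V_1$, $E_2(y,y')(sm_1,t)$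 on $V_2$, and for $x\in V_1,y\in V_2$: $E(x,y)(s,t)=E(y,x)(s,t)=\top$ iff $(sl_x,r_xl_y,r_yt)\in P$. This product is associative. For a finite nonempty sequence $\mathcal{G}_1,\dots,\mathcal{G}_n$ all evaluating to the same idempotent $e$, the idempotent product $\bigodot_i\mathcal{G}_i$ is $\mathcal{G}_1\odot\cdots\odot\mathcal{G}_n$. $\mathrm{Reg}_0$ is the class of monoid-labelled graphs with one vertex; $\mathrm{Reg}_{k+1}$ consists of all $\mathcal{G}_1\odot\mathcal{G}_2$ with $\mathcal{G}_1,\mathcal{G}_2\in\mathrm{Reg}_k$ and all idempotent products of finite nonempty sequences in $\mathrm{Reg}_k$ evaluating to a common idempotent. A sequence $\mathcal{G}_1,\dots,\mathcal{G}_n$ all evaluating to an idempotent $e$ (length $n$) is a good forest path if for all $a,b\in M$ there is a sequence $\mathcal{H}_1,\dots,\mathcal{H}_k$ of monoid-labelled graphs evaluating to $e$ and a graph embedding $h$ from $\mathrm{dc}(a(\bigodot_i\mathcal{G}_i)b)$ to $\mathrm{dc}(a(\bigodot_j\mathcal{H}_j)b)$ such that: $h$ maps each vertex $x$ of $\mathcal{G}_i$ to a vertex of some $\mathcal{H}_j$ carrying the same label in $\mathcal{H}_j$ as $x$ has in $\mathcal{G}_i$; $h$ maps $\mathcal{G}_1$ into $\mathcal{H}_1$ and $\mathcal{G}_n$ into $\mathcal{H}_k$; and some $\mathcal{H}_j$ contains no vertex of the image of $h$. Otherwise it is a bad forest path. Graph embeddings are injective maps with $\{h(u),h(v)\}$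 an edge iff $\{u,v\}$ is. *)

From HB Require Import structures.
From mathcomp Require Import all_boot.
From mathcomp Require Import monoid.

Set Implicit Arguments.
Unset Strict Implicit.
Unset Printing Implicit Defensive.

#[short(type="finMonoidType")]
HB.structure Definition FinMonoid := {M of Monoid M & Finite M}.

Local Open Scope group_scope.

Fixpoint seq_all (T : Type) (p : T -> Prop) (s : seq T) : Prop :=
  match s with [::] => True | x :: s' => p x /\ seq_all p s' end.

Section MLGraphs.
Variable M : finMonoidType.

Definition Jideal (m : M) : {set M} := [set x * m * y | x : M, y : M].

Definition totally_ordered : Prop :=
  forall a b : M, Jideal (a * b) = Jideal a \/ Jideal (a * b) = Jideal b.

Definition idempotent (e : M) : Prop := e * e = e.

(* A (pre-)monoid-labelled graph (m, V, E, lambda); the constraint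
   l_x r_x = m is the separate predicate [mlg_wf] below. *)
Record mlgraph := MLGraph {
  ev   : M;
  vert : finType;
  edge : vert -> vert -> M -> M -> bool;
  lab  : vert -> (M * M)%type
}.

Definition mlg_wf (G : mlgraph) : Prop :=
  forall x : vert G, (lab x).1 * (lab x).2 = ev G.

Definition gscale (a b : M) (G : mlgraph) : mlgraph :=
  @MLGraph (a * ev G * b) (vert G)
    (fun x y s t => edge x y (s * a) (b * t))
    (fun x => (a * (lab x).1, (lab x).2 * b)).

Definition dc_adj (G : mlgraph) (x y : vert G) : bool :=
  (x != y) && edge x y 1 1.

Definition dc_embedding (G H : mlgraph) (h : vert G -> vert H) : Prop :=
  injective h /\ forall u v : vert G, dc_adj (h u) (h v) = dc_adj u v.

Section Product.
Variable P : {set (M * M * M)%type}.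

Definition gprod (G1 G2 : mlgraph) : mlgraph :=
  @MLGraph (ev G1 * ev G2) (vert G1 + vert G2)%type
    (fun u v s t =>
       match u, v with
       | inl x, inl x' => edge x x' s (ev G2 * t)
       | inr y, inr y' => edge y y' (s * ev G1) t
       | inl x, inr y
       | inr y, inl x =>
           (s * (lab x).1, (lab x).2 * (lab y).1, (lab y).2 * t) \in P
       end)
    (fun u => match u with
              | inl x => ((lab x).1, (lab x).2 * ev G2)
              | inr y => (ev G1 * (lab y).1, (lab y).2)
              end).

(* product G0 (.) G1 (.) ... (.) Gk of the nonempty sequence G0 :: Gs
   (bracketed to the right; the product is associative) *)
Fixpoint seqprod (G0 : mlgraph) (Gs : seq mlgraph) : mlgraph :=
  match Gs with
  | [::] => G0
  | G1 :: Gs' => gprod G0 (seqprod G1 Gs')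
  end.

Fixpoint seqprod_idx (G0 : mlgraph) (Gs : seq mlgraph) :
    vert (seqprod G0 Gs) -> nat :=
  match Gs return vert (seqprod G0 Gs) -> nat with
  | [::] => fun _ => 0%N
  | G1 :: Gs' => fun v =>
      match v with
      | inl _ => 0%N
      | inr w => (seqprod_idx w).+1
      end
  end.

(* label of a vertex of the product in its own factor *)
Fixpoint seqprod_lab (G0 : mlgraph) (Gs : seq mlgraph) :
    vert (seqprod G0 Gs) -> (M * M)%type :=
  match Gs return vert (seqprod G0 Gs) -> (M * M)%type with
  | [::] => fun x => lab x
  | G1 :: Gs' => fun v =>
      match v with
      | inl x => lab x
      | inr w => seqprod_lab w
      end
  end.

Fixpoint Reg (d : nat) (G : mlgraph) : Prop :=
  match d with
  | 0%N => mlg_wf G /\ #|vert G| = 1%N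
  | k.+1 =>
      (exists G1 G2 : mlgraph, Reg k G1 /\ Reg k G2 /\ G = gprod G1 G2) \/
      (exists (e : M) (G0 : mlgraph) (Gs : seq mlgraph),
          idempotent e /\
          seq_all (fun H => Reg k H /\ ev H = e) (G0 :: Gs) /\
          G = seqprod G0 Gs)
  end.

Definition idem_seq (e : M) (G0 : mlgraph) (Gs : seq mlgraph) : Prop :=
  idempotent e /\ seq_all (fun G => mlg_wf G /\ ev G = e) (G0 :: Gs).

Definition good_forest_path (e : M) (G0 : mlgraph) (Gs : seq mlgraph) : Prop :=
  idem_seq e G0 Gs /\
  forall a b : M,
    exists (H0 : mlgraph) (Hs : seq mlgraph),
      seq_all (fun H => mlg_wf H /\ ev H = e) (H0 :: Hs) /\
      exists h : vert (gscale a b (seqprod G0 Gs)) ->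
                 vert (gscale a b (seqprod H0 Hs)),
        dc_embedding h /\
        (forall v, seqprod_lab (h v) = seqprod_lab v) /\
        (forall v, seqprod_idx v = 0%N -> seqprod_idx (h v) = 0%N) /\
        (forall v, seqprod_idx v = size Gs -> seqprod_idx (h v) = size Hs) /\
        (exists j, (j <= size Hs)%N /\ forall v, seqprod_idx (h v) <> j).

Definition bad_forest_path (e : M) (G0 : mlgraph) (Gs : seq mlgraph) : Prop :=
  idem_seq e G0 Gs /\ ~ good_forest_path e G0 Gs.

End Product.
End MLGraphs.

From HB Require Import structures.
From mathcomp Require Import all_boot.
From mathcomp Require Import monoid.

Set Implicit Arguments.
Unset Strict Implicit.
Unset Printing Implicit Defensive.

Local Open Scope group_scope.

(* The vertices of a graph in Reg_d are linearly ordered, and the edge between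
   x before y is decided by P at (s l_x, m, r_y t) for a middle label m with
   l_x m = l_y and m r_y = r_x.  Given G0, G1, ..., Gn (n >= 2) evaluating to
   the idempotent e, so that G1 is an inner factor, embed their product into
   that of G0, G1, 0, G1, G2, ..., Gn, where 0 is the empty graph evaluating
   to e and is missed by the embedding.  In a totally ordered finite monoid,
   l r = e forces e l = l or r e = r.  Call a vertex y of G1 left if
   e l_y = l_y and right otherwise (then r_y e = r_y); left vertices go to the
   second copy of G1, right ones to the first, so the factors e inserted
   between the copies are absorbed.  A left vertex cannot precede a right one,
   and if a right x precedes a left y, total order forces their middle label
   to be r_x l_y, the one used by the new product. *)

Section FiniteMonoid.
Variable M : finMonoidType.

Lemma expg_collision (A : M) : exists i j, (i < j)%N /\ A ^+ i = A ^+ j.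
Proof.
pose f (i : 'I_#|M|.+1) := A ^+ i.
have /injectivePn [i [j ij fij]] : ~~ injectiveb f.
  by apply/injectiveP => /leq_card; rewrite card_ord ltnn.
case: (ltngtP i j) => [lt_ij | lt_ji | eq_ij].
- by exists i, j.
- by exists j, i.
- by rewrite (val_inj eq_ij) eqxx in ij.
Qed.

Lemma idempotent_expg (A : M) : exists2 k, (0 < k)%N & A ^+ k * A ^+ k = A ^+ k.
Proof.
have [i [j [lt_ij Aij]]] := expg_collision A.
pose p := (j - i)%N.
have periodic n : (i <= n)%N -> A ^+ (n + p) = A ^+ n.
  by move=> le_in; rewrite -(subnK le_in) -addnA subnKC 1?ltnW // !expgnDr Aij.
have periodic_mul t n : (i <= n)%N -> A ^+ (n + t * p) = A ^+ n.
  move=> le_in; elim: t => [|t IHt]; first by rewrite addn0.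
  by rewrite mulSn addnA addnAC periodic ?IHt // (leq_trans le_in) ?leq_addr.
exists (i.+1 * p)%N; first by rewrite muln_gt0 subn_gt0.
rewrite -expgnDr periodic_mul //.
by rewrite (leq_trans (leqnSn i)) // leq_pmulr // subn_gt0.
Qed.

Lemma expg_sandwich (x b y : M) n : b = x * b * y -> b = x ^+ n * b * y ^+ n.
Proof.
move=> bxy; elim: n => [|n IHn]; first by rewrite mul1g mulg1.
by rewrite {1}IHn {1}bxy expgSr expgS !mulgA.
Qed.

(* Stability of finite monoids: [a <=R b] and [b <=J a] imply [b <=R a]. *)
Lemma stability_r (a b u x y : M) : a = b * u -> b = x * a * y -> exists v, b = a * v.
Proof.
move=> abu bxay; have bxb : b = x * b * (u * y) by rewrite {1}bxay abu !mulgA.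
have [[|k] // _ idk] := idempotent_expg (u * y).
have bk := expg_sandwich k.+1 bxb.
have bfix : b * (u * y) ^+ k.+1 = b by rewrite {2}bk {1}bk -!mulgA idk.
by exists (y * (u * y) ^+ k); rewrite -{1}bfix expgS !mulgA abu.
Qed.

Lemma stability_l (a b u x y : M) : a = u * b -> b = x * a * y -> exists v, b = v * a.
Proof.
move=> aub bxay; have bxb : b = (x * u) * b * y by rewrite {1}bxay aub !mulgA.
have [[|k] // _ idk] := idempotent_expg (x * u).
have bk := expg_sandwich k.+1 bxb.
have bfix : (x * u) ^+ k.+1 * b = b by rewrite {2}bk {1}bk !mulgA idk.
by exists ((x * u) ^+ k * x); rewrite -{1}bfix expgSr -!mulgA aub.
Qed.

Lemma Jideal_eq_sandwich (a c : M) : Jideal a = Jideal c -> exists x y, c = x * a * y.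
Proof.
move=> Jac; have /imset2P [x y _ _ ->] : c \in Jideal a.
  by rewrite Jac; apply/imset2P; exists 1 1; rewrite ?inE ?mul1g ?mulg1.
by exists x, y.
Qed.

Section Idempotent.
Variable e : M.
Hypothesis idem_e : e * e = e.
Hypothesis totM : totally_ordered M.

Lemma idempotent_factor_absorbs (l r : M) : l * r = e -> e * l = l \/ r * e = r.
Proof.
move=> lre; case: (totM l r); rewrite lre => /Jideal_eq_sandwich [x [y sandwich]].
- left; have [v ->] := stability_r (esym lre) sandwich.
  by rewrite mulgA idem_e.
- right; have [v ->] := stability_l (esym lre) sandwich.
  by rewrite -mulgA idem_e.
Qed.

Lemma middle_label_eq (lx rx ly ry q : M) :
  lx * rx = e -> ly * ry = e -> lx * q = ly -> q * ry = rx ->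
  e * ly = ly -> e * lx != lx -> q = rx * ly.
Proof.
move=> lrx lry lqy qrx ely elx.
case: (totM lx q); rewrite lqy => /Jideal_eq_sandwich [x [y sandwich]].
- have lx_eq : lx = x * e * (ly * y) by rewrite sandwich -{1}ely !mulgA.
  have [v lxv] := stability_r (esym lrx) lx_eq.
  by rewrite lxv mulgA idem_e -lxv eqxx in elx.
- have [v qv] := stability_l (esym lqy) sandwich.
  by rewrite -qrx qv -{1}ely -lry !mulgA.
Qed.

End Idempotent.
End FiniteMonoid.

Lemma sub_seq_all (T : Type) (p q : T -> Prop) (s : seq T) :
  (forall x, p x -> q x) -> seq_all p s -> seq_all q s.
Proof. by move=> pq; elim: s => //= x s IHs [px ps]; split; auto. Qed.

Section Graphs.
Variables (M : finMonoidType) (P : {set (M * M * M)%type}).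

Definition selector_linear (G : mlgraph M) : Prop :=
  exists (before : vert G -> vert G -> Prop) (mid : vert G -> vert G -> M),
    (forall x y, x != y -> before x y \/ before y x) /\
    (forall x y, before x y ->
       [/\ (lab x).1 * mid x y = (lab y).1, mid x y * (lab y).2 = (lab x).2 &
           forall s t,
             edge x y s t = ((s * (lab x).1, mid x y, (lab y).2 * t) \in P) /\
             edge y x s t = ((s * (lab x).1, mid x y, (lab y).2 * t) \in P)]).

Lemma gprod_wf (G1 G2 : mlgraph M) :
  mlg_wf G1 -> mlg_wf G2 -> mlg_wf (gprod P G1 G2).
Proof. by move=> wf1 wf2 [x|y] /=; rewrite ?mulgA ?wf1 // -mulgA wf2. Qed.

Lemma gprod_selector_linear (G1 G2 : mlgraph M) : mlg_wf G1 -> mlg_wf G2 ->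
  selector_linear G1 -> selector_linear G2 -> selector_linear (gprod P G1 G2).
Proof.
move=> wf1 wf2 [bef1 [mid1 [tot1 lin1]]] [bef2 [mid2 [tot2 lin2]]].
exists (fun u v : vert G1 + vert G2 => match u, v with
  | inl x, inl x' => bef1 x x' | inr y, inr y' => bef2 y y'
  | inl _, inr _ => True | inr _, inl _ => False end).
exists (fun u v : vert G1 + vert G2 => match u, v with
  | inl x, inl x' => mid1 x x' | inr y, inr y' => mid2 y y'
  | inl x, inr y => (lab x).2 * (lab y).1 | inr _, inl _ => 1 end).
split=> [[x|y] [x'|y'] /= neq|[x|y] [x'|y'] //= bef].
- by apply: tot1; apply: contra neq => /eqP ->.
- by left.
- by right.
- by apply: tot2; apply: contra neq => /eqP ->.
- have [l_mid mid_r edges] := lin1 _ _ bef.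
  split=> [||s t]; [by [] | by rewrite mulgA mid_r | by rewrite -mulgA; apply: edges].
- by split; rewrite ?mulgA ?wf1 // -mulgA wf2.
- have [l_mid mid_r edges] := lin2 _ _ bef.
  split=> [||s t]; [by rewrite -mulgA l_mid | by [] | by rewrite mulgA; apply: edges].
Qed.

Lemma seqprod_selector_linear (G0 : mlgraph M) (Gs : seq (mlgraph M)) :
  seq_all (fun G => mlg_wf G /\ selector_linear G) (G0 :: Gs) ->
  mlg_wf (seqprod P G0 Gs) /\ selector_linear (seqprod P G0 Gs).
Proof.
elim: Gs G0 => [|G1 Gs IHGs] G0 /= [[wf0 lin0] lins] //.
have [wf1 lin1] := IHGs G1 lins.
by split; [apply: gprod_wf | apply: gprod_selector_linear].
Qed.

Lemma Reg_selector_linear d (G : mlgraph M) :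
  Reg P d G -> mlg_wf G /\ selector_linear G.
Proof.
elim: d G => [|d IHd] G.
  case=> wfG /fintype1 [x0 all_x0]; split=> //.
  exists (fun _ _ => False), (fun _ _ => 1); split=> // x y.
  by rewrite (all_x0 x) (all_x0 y) eqxx.
case=> [[G1 [G2 [reg1 [reg2 ->]]]] | [e [G0 [Gs [_ [regs ->]]]]]].
  have [wf1 lin1] := IHd _ reg1; have [wf2 lin2] := IHd _ reg2.
  by split; [apply: gprod_wf | apply: gprod_selector_linear].
apply/seqprod_selector_linear/(sub_seq_all _ regs) => H [regH _].
exact: IHd.
Qed.

Lemma ev_seqprod (e : M) (G0 : mlgraph M) (Gs : seq (mlgraph M)) : e * e = e ->
  seq_all (fun G => mlg_wf G /\ ev G = e) (G0 :: Gs) -> ev (seqprod P G0 Gs) = e.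
Proof.
move=> idem_e; elim: Gs G0 => [|G1 Gs IHGs] G0 /= [[_ ->] evs] //.
by rewrite (IHGs _ evs) idem_e.
Qed.

End Graphs.

Definition empty_mlgraph (M : finMonoidType) (m : M) : mlgraph M :=
  @MLGraph M m void (fun x => match x with end) (fun x => match x with end).

Lemma empty_mlgraph_wf (M : finMonoidType) (m : M) : mlg_wf (empty_mlgraph m).
Proof. by case. Qed.

Section Split.
Variables (M : finMonoidType) (P : {set (M * M * M)%type}) (e : M).
Hypothesis idem_e : e * e = e.
Hypothesis totM : totally_ordered M.
Variables (A B C0 : mlgraph M) (Cs : seq (mlgraph M)).
Hypotheses (wfB : mlg_wf B) (linB : selector_linear P B).
Hypotheses (evA : ev A = e) (evB : ev B = e) (evC : ev (seqprod P C0 Cs) = e).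

Definition left_vertex (y : vert B) : bool := e * (lab y).1 == (lab y).1.

Lemma right_vertex (y : vert B) : ~~ left_vertex y -> (lab y).2 * e = (lab y).2.
Proof.
move=> right_y.
have [el_l|//] := idempotent_factor_absorbs idem_e totM (etrans (wfB y) evB).
by rewrite /left_vertex el_l eqxx in right_y.
Qed.

Lemma edge_right_left (y' y : vert B) s t :
  ~~ left_vertex y' -> left_vertex y ->
  edge y' y s t = ((s * (lab y').1, (lab y').2 * (lab y).1, (lab y).2 * t) \in P) /\
  edge y y' s t = ((s * (lab y').1, (lab y').2 * (lab y).1, (lab y).2 * t) \in P).
Proof.
move=> right_y' /eqP left_y.
have [before [mid [totB edgesB]]] := linB.
have neq : y' != y by apply: contraNneq right_y' => ->; apply/eqP.
case: (totB _ _ neq) => [bef | bef]; have [l_mid mid_r edges] := edgesB _ _ bef.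
- have mid_eq := middle_label_eq idem_e totM (etrans (wfB y') evB)
    (etrans (wfB y) evB) l_mid mid_r left_y right_y'.
  by rewrite -mid_eq; apply: edges.
- by rewrite /left_vertex -l_mid mulgA left_y eqxx in right_y'.
Qed.

Definition split_map (u : vert (seqprod P A [:: B, C0 & Cs])) :
    vert (seqprod P A [:: B, empty_mlgraph e, B, C0 & Cs]) :=
  match u with
  | inl x => inl x
  | inr (inl y) => if left_vertex y then inr (inr (inr (inl y))) else inr (inl y)
  | inr (inr z) => inr (inr (inr (inr z)))
  end.

Lemma split_map_inj : injective split_map.
Proof.
by move=> [x|[y|z]] [x'|[y'|z']]; rewrite /split_map; do ?case: ifP => _; congruence.
Qed.

Lemma edge_split_map u v s t : edge (split_map u) (split_map v) s t = edge u v s t.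
Proof.
have ee z : z * e * e = z * e by rewrite -mulgA idem_e.
have eleft y z : left_vertex y -> z * e * (lab y).1 = z * (lab y).1.
  by move/eqP=> left_y; rewrite -mulgA left_y.
move: u v => [x|[y|z]] [x'|[y'|z']]; rewrite /split_map;
  do ?[case: (boolP (left_vertex y)) => ly];
  do ?[case: (boolP (left_vertex y')) => ly'];
  rewrite /= ?evA ?evB ?evC ?mul1g ?mulg1 ?mulgA ?idem_e ?ee //.
all: try by rewrite eleft.
- have [_ ->] := edge_right_left (s * e) (e * t) ly' ly.
  by rewrite (right_vertex ly') !mulgA.
- have [-> _] := edge_right_left (s * e) (e * t) ly ly'.
  by rewrite (right_vertex ly) !mulgA.
- by rewrite (right_vertex ly).
- by rewrite (right_vertex ly').
Qed.

Lemma seqprod_lab_split_map u : seqprod_lab (split_map u) = seqprod_lab u.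
Proof. by move: u => [x|[y|z]] //; rewrite /split_map; case: ifP. Qed.

Lemma seqprod_idx_split_map0 u :
  seqprod_idx u = 0%N -> seqprod_idx (split_map u) = 0%N.
Proof. by case: u. Qed.

Lemma seqprod_idx_split_mapS u :
  (1 < seqprod_idx u)%N -> seqprod_idx (split_map u) = (seqprod_idx u).+2.
Proof. by case: u => [x|[y|z]]. Qed.

Lemma seqprod_idx_split_map_neq2 u : seqprod_idx (split_map u) != 2%N.
Proof. by move: u => [x|[y|z]] //; rewrite /split_map; case: ifP. Qed.

End Split.

Theorem lemma4p5 (M : finMonoidType) (P : {set (M * M * M)%type}) :
  totally_ordered M ->
  forall (d : nat) (e : M) (G0 : mlgraph M) (Gs : seq (mlgraph M)),
    seq_all (Reg P d) (G0 :: Gs) ->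
    (2 < (size Gs).+1)%N ->
    ~ bad_forest_path P e G0 Gs.
Proof.
move=> totM d e G0 Gs regs size_Gs [[idem_e wf_evs] not_good]; apply: not_good.
split=> [//|a b].
case: Gs regs size_Gs wf_evs => [|G1 [|G2 Gs]] // [_ [/Reg_selector_linear [_ lin1] _]] _.
move=> [[wf0 ev0] [[wf1 ev1] wf_evs]].
have evC := ev_seqprod P idem_e wf_evs.
exists G0, [:: G1, empty_mlgraph e, G1, G2 & Gs]; split.
  by do !split=> //; apply: empty_mlgraph_wf.
pose h := @split_map _ P e G0 G1 G2 Gs.
have h_inj : injective h by exact: split_map_inj.
exists h; split; [split|split; [|split; [|split]]].
- exact: h_inj.
- move=> u v; rewrite /dc_adj (inj_eq h_inj); congr (_ && _).
  exact: (edge_split_map idem_e totM wf1 lin1 ev0 ev1 evC u v (1 * a) (b * 1)).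
- exact: seqprod_lab_split_map.
- exact: seqprod_idx_split_map0.
- by move=> u idx_u; rewrite seqprod_idx_split_mapS idx_u.
- by exists 2%N; split=> // u; apply/eqP/seqprod_idx_split_map_neq2.
Qed.
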